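(* Let $H$ and $K$ be permutation groups on $[p]$ and $[q]$, and let $G=H\otimes K=\{P_h\otimes P_k: h\in H,k\in K\}$, a permutation group on $[pq]$. Let $M\in\mathbb{R}^{pq\times pq}$ satisfy $MP=PM$ for all $P\in G$, and define $\hat M\in\mathbb{R}^{p^2\times q^2}$ by $$\hat M_{(i'-1)p+i,\,(j'-1)q+j}=M_{(i-1)q+j,\,(i'-1)q+j'}\qquad (i,i'\in[p],\ j,j'\in[q]).$$ Then $\mathrm{rank}(\hat M)\le\min\big(\dim\mathcal{E}(H),\dim\mathcal{E}(K)\big)$.
   Context: For a permutation $g$ of $[m]$, $P_g$ is the $m\times m$ permutation matrix with $(P_g)_{i,j}=1$ iff $i=g(j)$; $\otimes$ denotes the Kronecker product. For a permutation group $L$ on $[m]$, $\mathcal{E}(L)=\{X\in\mathbb{R}^{m\times m}: XP_g=P_gX \text{ for all } g\in L\}$. *)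

From HB Require Import structures.
From mathcomp Require Import all_boot all_order all_algebra all_fingroup.
Set Implicit Arguments. Unset Strict Implicit. Unset Printing Implicit Defensive.
Import Order.TTheory GRing.Theory Num.Theory.
Local Open Scope ring_scope.

(* 0-based index conventions: [m] is 'I_m; the pair (i, j) with i : 'I_m,
   j : 'I_n corresponds to the index i * n + j of 'I_(m * n)
   (the paper's (i-1)q + j in 1-based indexing). *)
Lemma pidx_proof m n (i : 'I_m) (j : 'I_n) : (i * n + j < m * n)%N.
Proof.
case: i j => i /= Hi [j /= Hj].
apply: (@leq_trans (i * n + n)); first by rewrite ltn_add2l.
by rewrite -mulSnr leq_mul2r Hi orbT.
Qed.
Definition pidx m n (i : 'I_m) (j : 'I_n) : 'I_(m * n) := Ordinal (pidx_proof i j).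

Lemma divord_proof m n (r : 'I_(m * n)) : (r %/ n < m)%N.
Proof. by rewrite ltn_divLR ?(ltn_ord r) //; case: n r => [|n] r //; rewrite muln0 in r; case: r. Qed.
Lemma modord_proof m n (r : 'I_(m * n)) : (r %% n < n)%N.
Proof. by rewrite ltn_mod; case: n r => [|n] r //; rewrite muln0 in r; case: r. Qed.
Definition divord m n (r : 'I_(m * n)) : 'I_m := Ordinal (divord_proof r).
Definition modord m n (r : 'I_(m * n)) : 'I_n := Ordinal (modord_proof r).

Definition Pmx (R : nzRingType) m (g : {perm 'I_m}) : 'M[R]_m :=
  \matrix_(i, j) (i == g j)%:R.

Definition kron (R : nzRingType) m1 n1 m2 n2 (A : 'M[R]_(m1, n1)) (B : 'M[R]_(m2, n2))
  : 'M[R]_(m1 * m2, n1 * n2) :=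
  \matrix_(r, c) (A (divord r) (divord c) * B (modord r) (modord c)).

Definition commSpace (R : fieldType) m (L : {set {perm 'I_m}}) : {vspace 'M[R]_m} :=
  (\bigcap_(g in L) lker (linfun (fun X : 'M[R]_m => X *m Pmx R g - Pmx R g *m X)))%VS.

Definition Mhat (R : nzRingType) p q (M : 'M[R]_(p * q)) : 'M[R]_(p * p, q * q) :=
  \matrix_(r, c) M (pidx (modord r) (modord c)) (pidx (divord r) (divord c)).
Arguments Pmx R {m} g.
Arguments commSpace R {m} L.

From HB Require Import structures.
From mathcomp Require Import all_boot all_order all_algebra all_fingroup.
Set Implicit Arguments. Unset Strict Implicit. Unset Printing Implicit Defensive.
Import Order.TTheory GRing.Theory Num.Theory.
Local Open Scope ring_scope.

(* Fixing the column index (j', j) of \hat M and reading the column as a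
   p x p matrix gives the slice X_{i,i'} = M_{(i,j),(i',j')}.  Since M commutes
   with P_h (x) I, i.e. is invariant under simultaneous permutation of rows and
   columns by h (x) id, every such slice commutes with P_h and lies in E(H);
   so the column space of \hat M is spanned by samplings of a basis of E(H).
   The rows of \hat M are symmetrically slices lying in E(K). *)

Section PairIndex.

Variables m n : nat.

Lemma divord_pidx (i : 'I_m) (j : 'I_n) : divord (pidx i j) = i.
Proof.
have n_gt0 : (0 < n)%N by case: n j => [[]|].
by apply: val_inj; rewrite /= divnMDl // divn_small // addn0.
Qed.

Lemma modord_pidx (i : 'I_m) (j : 'I_n) : modord (pidx i j) = j.
Proof. by apply: val_inj; rewrite /= modnMDl modn_small. Qed.

Lemma pidx_divord_modord (r : 'I_(m * n)) : pidx (divord r) (modord r) = r.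
Proof. by apply: val_inj; rewrite /= -divn_eq. Qed.

Lemma eq_pidx (i i' : 'I_m) (j j' : 'I_n) :
  (pidx i j == pidx i' j') = (i == i') && (j == j').
Proof.
apply/eqP/andP => [E | [/eqP-> /eqP->] //].
split; apply/eqP; first by rewrite -(divord_pidx i j) E divord_pidx.
by rewrite -(modord_pidx i j) E modord_pidx.
Qed.

End PairIndex.

Section PermMatrix.

Variables (R : nzRingType) (m : nat).
Implicit Types (g : {perm 'I_m}) (X : 'M[R]_m).

Lemma mulmx_Pmx X g i j : (X *m Pmx R g) i j = X i (g j).
Proof.
rewrite mxE (bigD1 (g j)) //= mxE eqxx mulr1 big1 ?addr0 // => c /negbTE c_gj.
by rewrite mxE c_gj mulr0.
Qed.

Lemma Pmx_mulmx g X i j : (Pmx R g *m X) i j = X (g^-1 i)%g j.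
Proof.
rewrite mxE (bigD1 (g^-1 i)%g) //= mxE permKV eqxx mul1r big1 ?addr0 // => c.
by move=> /negbTE c_gi; rewrite mxE eq_sym (canF_eq (permK g)) c_gi mul0r.
Qed.

Lemma Pmx_commuteP g X :
  X *m Pmx R g = Pmx R g *m X <-> forall i j, X (g i) (g j) = X i j.
Proof.
split=> [XP i j | Xg].
  by have := congr1 (fun A : 'M[R]_m => A (g i) j) XP; rewrite /= mulmx_Pmx Pmx_mulmx permK.
by apply/matrixP => i j; rewrite mulmx_Pmx Pmx_mulmx -{1}(permKV g i) Xg.
Qed.

End PermMatrix.

Section KroneckerPerm.

Variables p q : nat.
Implicit Types (h : {perm 'I_p}) (k : {perm 'I_q}).

Lemma kron_perm_inj h k :
  injective (fun s : 'I_(p * q) => pidx (h (divord s)) (k (modord s))).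
Proof.
move=> s t /eqP; rewrite eq_pidx !(inj_eq perm_inj) => /andP[/eqP ds /eqP ms].
by rewrite -(pidx_divord_modord s) -(pidx_divord_modord t) ds ms.
Qed.

Definition kron_perm h k : {perm 'I_(p * q)} := perm (@kron_perm_inj h k).

Lemma kron_permE h k i j : kron_perm h k (pidx i j) = pidx (h i) (k j).
Proof. by rewrite permE /= divord_pidx modord_pidx. Qed.

Lemma kron_Pmx (R : nzRingType) h k :
  kron (Pmx R h) (Pmx R k) = Pmx R (kron_perm h k).
Proof.
apply/matrixP => r s; rewrite !mxE permE /= -{3}(pidx_divord_modord r).
by rewrite eq_pidx -natrM mulnb.
Qed.

End KroneckerPerm.

Section CommutantSpace.

Variables (R : fieldType) (m : nat).

Definition commPmx (g : {perm 'I_m}) (X : 'M[R]_m) := X *m Pmx R g - Pmx R g *m X.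

Fact commPmx_linear g : linear (commPmx g).
Proof.
move=> a X Y; rewrite /commPmx mulmxDl mulmxDr -!scalemxAl -!scalemxAr.
by rewrite scalerBr addrACA opprD.
Qed.

HB.instance Definition _ g :=
  GRing.isLinear.Build R 'M[R]_m 'M[R]_m _ (commPmx g) (commPmx_linear g).

Lemma memv_commSpace (L : {set {perm 'I_m}}) (X : 'M[R]_m) :
  (forall g, g \in L -> forall i j, X (g i) (g j) = X i j) ->
  X \in commSpace R L.
Proof.
move=> XL; rewrite memvE; apply/subv_bigcapP => g Lg; rewrite -memvE.
by rewrite memv_ker (lfunE (commPmx g)) subr_eq0; apply/eqP/Pmx_commuteP/XL.
Qed.

End CommutantSpace.

Lemma mxrank_sampled_leq_dimv (R : fieldType) m n1 n2 (U : {vspace 'M[R]_m})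
    (A : 'M[R]_(n1, n2)) (Y : 'I_n2 -> 'M[R]_m) (f g : 'I_n1 -> 'I_m) :
  (forall c, Y c \in U) -> (forall r c, A r c = Y c (f r) (g r)) ->
  (\rank A <= \dim U)%N.
Proof.
move=> YU AE.
(* expand each Y c in a basis of U: A then factors through \dim U coordinates *)
pose B : 'M[R]_(n1, \dim U) := \matrix_(r, l) (vbasis U)`_l (f r) (g r).
pose C : 'M[R]_(\dim U, n2) := \matrix_(l, c) coord (vbasis U) l (Y c).
have -> : A = B *m C.
  apply/matrixP => r c; rewrite AE mxE (coord_vbasis (YU c)) summxE.
  by apply: eq_bigr => l _; rewrite !mxE mulrC.
exact: leq_trans (mxrankM_maxr _ _) (rank_leq_row _).
Qed.

Section Slices.

Variables (R : fieldType) (p q : nat) (M : 'M[R]_(p * q)).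

Definition fst_slice (j j' : 'I_q) : 'M[R]_p :=
  \matrix_(i, i') M (pidx i j) (pidx i' j').

Definition snd_slice (i i' : 'I_p) : 'M[R]_q :=
  \matrix_(j, j') M (pidx i j) (pidx i' j').

Lemma fst_slice_commSpace (H : {set {perm 'I_p}}) j j' :
  (forall h, h \in H ->
     M *m kron (Pmx R h) (Pmx R 1%g) = kron (Pmx R h) (Pmx R 1%g) *m M) ->
  fst_slice j j' \in commSpace R H.
Proof.
move=> HM; apply: memv_commSpace => h Hh i i'; rewrite !mxE.
move: (HM h Hh); rewrite kron_Pmx => /Pmx_commuteP/(_ (pidx i j) (pidx i' j')).
by rewrite !kron_permE !perm1.
Qed.

Lemma snd_slice_commSpace (K : {set {perm 'I_q}}) i i' :
  (forall k, k \in K ->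
     M *m kron (Pmx R 1%g) (Pmx R k) = kron (Pmx R 1%g) (Pmx R k) *m M) ->
  snd_slice i i' \in commSpace R K.
Proof.
move=> KM; apply: memv_commSpace => k Kk j j'; rewrite !mxE.
move: (KM k Kk); rewrite kron_Pmx => /Pmx_commuteP/(_ (pidx i j) (pidx i' j')).
by rewrite !kron_permE !perm1.
Qed.

Lemma Mhat_fst_slice r c :
  Mhat M r c = fst_slice (modord c) (divord c) (modord r) (divord r).
Proof. by rewrite !mxE. Qed.

Lemma Mhat_snd_slice r c :
  Mhat M r c = snd_slice (modord r) (divord r) (modord c) (divord c).
Proof. by rewrite !mxE. Qed.

End Slices.

Theorem mainTheorem4 (R : realFieldType) (p q : nat)
  (H : {group {perm 'I_p}}) (K : {group {perm 'I_q}}) (M : 'M[R]_(p * q)) :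
  (forall h k, h \in H -> k \in K ->
     M *m kron (Pmx R h) (Pmx R k) = kron (Pmx R h) (Pmx R k) *m M) ->
  (\rank (Mhat M) <= minn (\dim (commSpace R H)) (\dim (commSpace R K)))%N.
Proof.
move=> HKM; rewrite leq_min; apply/andP; split.
  apply: (mxrank_sampled_leq_dimv (Y := fun c => fst_slice M (modord c) (divord c))).
    by move=> c; apply: fst_slice_commSpace => h Hh; apply: HKM.
  exact: Mhat_fst_slice.
rewrite -mxrank_tr.
apply: (mxrank_sampled_leq_dimv (Y := fun r => snd_slice M (modord r) (divord r))).
  by move=> r; apply: snd_slice_commSpace => k Kk; apply: HKM.
by move=> c r; rewrite mxE Mhat_snd_slice.
Qed.
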